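(* Let $m\in\mathbb{N}$ and let $f\in C^m_{\mathrm{pol}}(\mathbb{R})$ be increasing, with $|f^{(n)}(x)|\lesssim1+|x|^p$ for all $n=0,1,\dots,m$. For $\lambda>0$ let $J_\lambda:=(I+\lambda f)^{-1}$ and $f_\lambda:=\lambda^{-1}(I-J_\lambda)$. Then: (i) $f_\lambda$ and $J_\lambda$ belong to $C^m(\mathbb{R})$; (ii) for $\lambda\le1$ there exists $q\in\mathbb{N}$, independent of $\lambda$, such that $|f^{(n)}_\lambda(x)|\lesssim1+|x|^q$ for all $n=0,1,\dots,m$ (with implicit constant independent of $\lambda$); (iii) $f^{(n)}_\lambda\to f^{(n)}$ pointwise as $\lambda\to0$, for $n=0,1,\dots,m$.
   Context: $f_\lambda$ is the Yosida approximation of the increasing function $f$ and $J_\lambda$ its resolvent. $C^m_{\mathrm{pol}}(\mathbb{R})$ is the space of $\phi\in C^m(\mathbb{R})$ with $\phi,\phi',\dots,\phi^{(m)}$ of polynomial growth. *)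

From Stdlib Require Import Reals ClassicalEpsilon.
From Coquelicot Require Import Coquelicot.
Open Scope R_scope.

(* g is of class C^m on R: the iterated derivatives Derive_n g k exist
   everywhere for k < m (so Derive_n g (k+1) is the genuine derivative of
   Derive_n g k) and the m-th derivative is continuous. *)
Definition Cm (m : nat) (g : R -> R) : Prop :=
  (forall (k : nat) (x : R), (k < m)%nat -> ex_derive (Derive_n g k) x) /\
  (forall x : R, continuous (Derive_n g m) x).

Definition nondecreasing (f : R -> R) : Prop := forall x y, x <= y -> f x <= f y.

(* Resolvent J_lam = (I + lam f)^{-1}: J_lam y is the (unique, for f continuous
   non-decreasing and lam > 0) solution x of x + lam * f x = y. *)
Definition resolvent (f : R -> R) (lam : R) (y : R) : R :=
  epsilon (inhabits 0) (fun x => x + lam * f x = y).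

Definition yosida (f : R -> R) (lam : R) (y : R) : R :=
  (y - resolvent f lam y) / lam.

(* J = resolvent f lam inverts t |-> t + lam f t, so J' = W o J with
   W y = 1 / (1 + lam f'(y)), and 0 < W <= 1 since f' >= 0.  By the chain rule every
   derivative of J and of yosida f lam = f o J is then a polynomial in lam, J, W o J and the
   f^(i) o J, i <= n.  Such an expression is continuous in (lam, J x), which gives the C^m
   regularity and, because J x -> x and W -> 1 as lam -> 0, the pointwise limits; and it has
   polynomial growth uniformly in lam <= 1, because |J x| <= |x| + |f 0|, |W| <= 1 and the
   f^(i) grow polynomially. *)

From Stdlib Require Import Reals Lra Lia ClassicalEpsilon Ranalysis5.
From Coquelicot Require Import Coquelicot.
Open Scope R_scope.

Lemma is_derive_eq (g : R -> R) x l l' : is_derive g x l -> l = l' -> is_derive g x l'.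
Proof. now intros H <-. Qed.

Lemma is_derive_Rconst (a x : R) : is_derive (fun _ : R => a) x 0.
Proof. exact (is_derive_const (K:=R_AbsRing) (V:=R_NormedModule) a x). Qed.

Lemma is_derive_Rid (x : R) : is_derive (fun t : R => t) x 1.
Proof. exact (is_derive_id (K:=R_AbsRing) x). Qed.

Lemma is_derive_Rplus (g h : R -> R) x a b :
  is_derive g x a -> is_derive h x b -> is_derive (fun t => g t + h t) x (a + b).
Proof. intros; apply (is_derive_plus (K:=R_AbsRing) (V:=R_NormedModule)); auto. Qed.

Lemma is_derive_Rmult (g h : R -> R) x a b :
  is_derive g x a -> is_derive h x b ->
  is_derive (fun t => g t * h t) x (a * h x + g x * b).
Proof. intros; apply (is_derive_mult (K:=R_AbsRing)); auto. intros; apply Rmult_comm. Qed.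

Section RealLimits.
Context {T : Type} {F : (T -> Prop) -> Prop} {FF : Filter F}.

Lemma filterlim_Rplus (a b : T -> R) x y :
  filterlim a F (locally x) -> filterlim b F (locally y) ->
  filterlim (fun t => a t + b t) F (locally (x + y)).
Proof.
  intros; eapply filterlim_comp_2; eauto.
  apply (filterlim_plus (K:=R_AbsRing) (V:=R_NormedModule)).
Qed.

Lemma filterlim_Rmult (a b : T -> R) x y :
  filterlim a F (locally x) -> filterlim b F (locally y) ->
  filterlim (fun t => a t * b t) F (locally (x * y)).
Proof.
  intros; eapply filterlim_comp_2; eauto.
  apply (filterlim_mult (K:=R_AbsRing)).
Qed.

Lemma filterlim_Rinv (a : T -> R) x :
  filterlim a F (locally x) -> x <> 0 -> filterlim (fun t => / a t) F (locally (/ x)).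
Proof.
  intros Ha Hx; eapply filterlim_comp; eauto.
  now apply (continuous_Rinv_comp (fun y => y)); [apply continuous_id|].
Qed.

End RealLimits.

Section Resolvent.
Variables (f : R -> R) (lam : R).
Hypotheses (f_cont : forall x, continuous f x) (f_incr : nondecreasing f) (lam_pos : 0 < lam).

Let J := resolvent f lam.

Lemma resolvent_equation_solvable y : exists x, x + lam * f x = y.
Proof.
  set (r := lam * Rabs (f y)).
  assert (r_nonneg : 0 <= r) by (apply Rmult_le_pos; [lra | apply Rabs_pos]).
  assert (below : (y - r) + lam * f (y - r) <= y).
  { assert (f (y - r) <= f y) by (apply f_incr; lra).
    pose proof (Rle_abs (f y)); unfold r in *; nra. }
  assert (above : y <= (y + r) + lam * f (y + r)).
  { assert (f y <= f (y + r)) by (apply f_incr; lra).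
    pose proof (Rle_abs (- f y)); rewrite Rabs_Ropp in *; unfold r in *; nra. }
  destruct (IVT_gen (fun x => x + lam * f x) (y - r) (y + r) y) as [x [_ Hx]].
  - intro t; apply continuity_pt_filterlim.
    apply (continuous_plus (fun x => x) (fun x => lam * f x));
      [apply continuous_id | apply (continuous_scal_r lam f), f_cont].
  - rewrite Rmin_left, Rmax_right; lra.
  - now exists x.
Qed.

Lemma resolvent_spec y : J y + lam * f (J y) = y.
Proof.
  exact (epsilon_spec (inhabits 0) (fun x => x + lam * f x = y)
           (resolvent_equation_solvable y)).
Qed.

Lemma resolvent_increment x y : x <= y -> 0 <= J y - J x <= y - x.
Proof.
  intro Hxy; pose proof (resolvent_spec x); pose proof (resolvent_spec y).
  destruct (Rle_dec (J x) (J y)) as [Hle | Hgt].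
  - assert (f (J x) <= f (J y)) by now apply f_incr. nra.
  - assert (f (J y) <= f (J x)) by (apply f_incr; lra). nra.
Qed.

Lemma resolvent_nondecreasing : nondecreasing J.
Proof. intros x y Hxy; pose proof (resolvent_increment x y Hxy); lra. Qed.

Lemma resolvent_1_lipschitz x y : Rabs (J x - J y) <= Rabs (x - y).
Proof.
  destruct (Rle_dec x y) as [Hxy | Hyx].
  - pose proof (resolvent_increment x y Hxy).
    rewrite Rabs_minus_sym, (Rabs_minus_sym x y), !Rabs_right; lra.
  - pose proof (resolvent_increment y x ltac:(lra)). rewrite !Rabs_right; lra.
Qed.

Lemma resolvent_continuous y : continuous J y.
Proof.
  apply continuity_pt_filterlim; intros e He; exists e; split; [exact He|].
  intros x [_ Hx]; simpl in *; unfold R_dist in *.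
  pose proof (resolvent_1_lipschitz x y); lra.
Qed.

Lemma yosida_eq_comp_resolvent y : yosida f lam y = f (J y).
Proof. unfold yosida; pose proof (resolvent_spec y); fold J; field_simplify_eq; lra. Qed.

(* f (J y) lies between 0 and f y, because J y - y = - lam f (J y). *)
Lemma Rabs_comp_resolvent_le y : Rabs (f (J y)) <= Rabs (f y).
Proof.
  pose proof (resolvent_spec y).
  destruct (Rle_dec (J y) y) as [Hle | Hgt].
  - assert (f (J y) <= f y) by now apply f_incr.
    assert (0 <= f (J y)) by nra.
    rewrite !Rabs_right; lra.
  - assert (f y <= f (J y)) by (apply f_incr; lra).
    assert (f (J y) <= 0) by nra.
    rewrite !Rabs_left1; lra.
Qed.

Lemma resolvent_near_id y : Rabs (J y - y) <= lam * Rabs (f y).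
Proof.
  replace (J y - y) with (- (lam * f (J y))) by (pose proof (resolvent_spec y); lra).
  rewrite Rabs_Ropp, Rabs_mult, (Rabs_right lam) by lra.
  apply Rmult_le_compat_l; [lra | apply Rabs_comp_resolvent_le].
Qed.

Lemma resolvent_abs_le y : Rabs (J y) <= Rabs y + lam * Rabs (f 0).
Proof.
  pose proof (resolvent_1_lipschitz y 0); pose proof (resolvent_near_id 0).
  pose proof (Rabs_triang (J y - J 0) (J 0 - 0)).
  replace (J y - J 0 + (J 0 - 0)) with (J y) in * by ring.
  rewrite Rminus_0_r in *; lra.
Qed.

End Resolvent.

Lemma resolvent_cvg_id (f : R -> R) x :
  (forall x, continuous f x) -> nondecreasing f ->
  filterlim (fun lam => resolvent f lam x) (at_right 0) (locally x).
Proof.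
  intros f_cont f_incr; apply filterlim_locally; intro eps.
  pose proof (Rabs_pos (f x)); pose proof (cond_pos eps).
  set (d := eps / (1 + Rabs (f x))).
  assert (d_pos : 0 < d) by (apply Rdiv_lt_0_compat; lra).
  assert (d_fx : d * Rabs (f x) = eps - d) by (unfold d; field; lra).
  exists (mkposreal d d_pos); intros lam Hlam lam_pos.
  change (Rabs (lam - 0) < d) in Hlam; rewrite Rminus_0_r, Rabs_right in Hlam by lra.
  change (Rabs (resolvent f lam x - x) < eps).
  pose proof (resolvent_near_id f lam f_cont f_incr lam_pos x).
  assert (lam * Rabs (f x) <= d * Rabs (f x)) by (apply Rmult_le_compat_r; lra).
  lra.
Qed.

Lemma Derive_nonneg_of_nondecreasing (g : R -> R) :
  (forall x, ex_derive g x) -> nondecreasing g -> forall x, 0 <= Derive g x.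
Proof.
  intros g_der g_incr x.
  set (pr := fun t => exist (fun l => derivable_pt_lim g t l) (Derive g t)
                        (proj1 (is_derive_Reals _ _ _) (Derive_correct g t (g_der t)))
                 : derivable_pt g t).
  exact (nonneg_derivative_0 g pr g_incr x).
Qed.

(* The derivative of [resolvent f lam] at [x] is [resolvent_slope f lam (resolvent f lam x)]. *)
Definition resolvent_slope (f : R -> R) (lam y : R) : R := / (1 + lam * Derive_n f 1 y).

Lemma is_derive_resolvent (f : R -> R) (lam : R) :
  0 < lam -> nondecreasing f -> (forall x, ex_derive f x) ->
  forall x, is_derive (resolvent f lam) x (resolvent_slope f lam (resolvent f lam x)).
Proof.
  intros lam_pos f_incr f_der x.
  assert (f_cont : forall x, continuous f x)
    by (intro; apply (ex_derive_continuous (K:=R_AbsRing) (V:=R_NormedModule)), f_der).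
  set (J := resolvent f lam).
  set (phi := fun t => t + lam * f t).
  assert (phi_der : forall t, derivable_pt_lim phi t (1 + lam * Derive f t)).
  { intro t; apply is_derive_Reals, is_derive_Rplus;
      [apply is_derive_Rid | apply is_derive_scal, Derive_correct, f_der]. }
  set (pr := fun t (_ : J (x - 1) <= t <= J (x + 1)) =>
     exist (fun l => derivable_pt_lim phi t l) _ (phi_der t) : derivable_pt phi t).
  assert (J_between : J (x - 1) <= J x <= J (x + 1))
    by (split; apply resolvent_nondecreasing; auto; lra).
  assert (phi_der_pos : 0 < derive_pt phi (J x) (pr (J x) J_between)).
  { simpl; pose proof (Derive_nonneg_of_nondecreasing f f_der f_incr (J x)); nra. }
  pose proof (derivable_pt_lim_recip_interv phi J (x - 1) (x + 1) x pr
     (proj2 (continuity_pt_filterlim _ _) (resolvent_continuous f lam f_cont f_incr lam_pos x))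
     ltac:(lra) ltac:(lra) J_between (fun t _ => resolvent_spec f lam f_cont f_incr lam_pos t)
     ltac:(lra)) as H.
  apply is_derive_Reals; simpl in H; unfold Rdiv in H; rewrite Rmult_1_l in H; exact H.
Qed.

(* Polynomials in y, lam, [resolvent_slope f lam y] and the derivatives [Derive_n f i y]; the
   derivatives of [yosida f lam] and [resolvent f lam] are such polynomials evaluated at
   [y = resolvent f lam x]. *)
Inductive term : Type :=
  | TArg | TLam | TSlope | TDer (i : nat) | TConst (r : R)
  | TAdd (s t : term) | TMul (s t : term).

Fixpoint term_eval (f : R -> R) (lam y : R) (t : term) : R :=
  match t with
  | TArg => y
  | TLam => lam
  | TSlope => resolvent_slope f lam y
  | TDer i => Derive_n f i y
  | TConst r => r
  | TAdd s t => term_eval f lam y s + term_eval f lam y t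
  | TMul s t => term_eval f lam y s * term_eval f lam y t
  end.

Fixpoint term_dy (t : term) : term :=
  match t with
  | TArg => TConst 1
  | TLam | TConst _ => TConst 0
  | TSlope => TMul (TConst (-1)) (TMul TLam (TMul (TDer 2) (TMul TSlope TSlope)))
  | TDer i => TDer (S i)
  | TAdd s t => TAdd (term_dy s) (term_dy t)
  | TMul s t => TAdd (TMul (term_dy s) t) (TMul s (term_dy t))
  end.

(* Formal derivative in x of [t] evaluated at [y = resolvent f lam x] (chain rule). *)
Definition term_dx (t : term) : term := TMul (term_dy t) TSlope.

Fixpoint term_order (t : term) : nat :=
  match t with
  | TArg | TLam | TConst _ => 0
  | TSlope => 1
  | TDer i => i
  | TAdd s t | TMul s t => Nat.max (term_order s) (term_order t)
  end.

Lemma term_order_dy t : (term_order (term_dy t) <= S (term_order t))%nat.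
Proof. induction t; simpl; lia. Qed.

Lemma term_order_iter_dx n t : (term_order (Nat.iter n term_dx t) <= n + term_order t)%nat.
Proof.
  induction n as [|n IH]; simpl; [lia|].
  pose proof (term_order_dy (Nat.iter n term_dx t)); lia.
Qed.

Lemma is_derive_term_eval f lam y k t :
  (term_order t <= k)%nat ->
  (forall i, (i <= k)%nat -> ex_derive (Derive_n f i) y) ->
  ((1 <= k)%nat -> 1 + lam * Derive_n f 1 y <> 0) ->
  is_derive (fun y => term_eval f lam y t) y (term_eval f lam y (term_dy t)).
Proof.
  intros Hk f_der slope_def; induction t; simpl in *.
  - apply is_derive_Rid.
  - apply is_derive_Rconst.
  - eapply is_derive_eq.
    + apply is_derive_inv; [|apply slope_def; lia].
      apply is_derive_Rplus; [apply is_derive_Rconst|].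
      apply is_derive_scal, Derive_correct, f_der; lia.
    + unfold resolvent_slope; simpl; field; apply slope_def; lia.
  - apply Derive_correct, f_der; lia.
  - apply is_derive_Rconst.
  - apply is_derive_Rplus; [apply IHt1 | apply IHt2]; lia.
  - apply is_derive_Rmult; [apply IHt1 | apply IHt2]; lia.
Qed.

Lemma filterlim_term_eval f {T} (F : (T -> Prop) -> Prop) {FF : Filter F}
    (lam y : T -> R) lam0 y0 k t :
  (term_order t <= k)%nat ->
  filterlim lam F (locally lam0) -> filterlim y F (locally y0) ->
  (forall i, (i <= k)%nat -> continuous (Derive_n f i) y0) ->
  ((1 <= k)%nat -> 1 + lam0 * Derive_n f 1 y0 <> 0) ->
  filterlim (fun s => term_eval f (lam s) (y s) t) F (locally (term_eval f lam0 y0 t)).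
Proof.
  intros Hk lam_cvg y_cvg f_cont slope_def; induction t; simpl in *.
  - exact y_cvg.
  - exact lam_cvg.
  - apply filterlim_Rinv; [|apply slope_def; lia].
    apply filterlim_Rplus; [apply filterlim_const|].
    apply filterlim_Rmult; [exact lam_cvg|].
    eapply filterlim_comp; [exact y_cvg | apply f_cont; lia].
  - eapply filterlim_comp; [exact y_cvg | apply f_cont; lia].
  - apply filterlim_const.
  - apply filterlim_Rplus; [apply IHt1 | apply IHt2]; lia.
  - apply filterlim_Rmult; [apply IHt1 | apply IHt2]; lia.
Qed.

Lemma one_plus_pow_le t p : 0 <= t -> 1 + t ^ p <= 2 * (1 + t) ^ p.
Proof.
  intro t_nonneg.
  assert (1 <= (1 + t) ^ p) by (apply pow_R1_Rle; lra).
  assert (t ^ p <= (1 + t) ^ p) by (apply pow_incr; lra).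
  lra.
Qed.

Lemma pow_one_plus_le t q : 0 <= t -> (1 + t) ^ q <= 2 ^ q * (1 + t ^ q).
Proof.
  intro t_nonneg; pose proof (pow_le t q t_nonneg); pose proof (pow_le 2 q ltac:(lra)).
  destruct (Rle_dec t 1) as [t_le1 | t_gt1].
  - assert ((1 + t) ^ q <= 2 ^ q) by (apply pow_incr; lra). nra.
  - assert ((1 + t) ^ q <= (2 * t) ^ q) by (apply pow_incr; lra).
    rewrite Rpow_mult_distr in *; nra.
Qed.

Definition poly_bounded {I : Type} (P : I -> Prop) (g : I -> R -> R) : Prop :=
  exists c q, 0 <= c /\ forall i x, P i -> Rabs (g i x) <= c * (1 + Rabs x) ^ q.

Section PolyBounded.
Context {I : Type} (P : I -> Prop).

Lemma poly_bounded_of_bounded (g : I -> R -> R) c :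
  (forall i x, P i -> Rabs (g i x) <= c) -> poly_bounded P g.
Proof.
  intro g_bd; exists (Rabs c), 0%nat; split; [apply Rabs_pos|].
  intros i x Hi; rewrite pow_O, Rmult_1_r; pose proof (Rle_abs c); pose proof (g_bd i x Hi); lra.
Qed.

Lemma poly_bounded_plus (g h : I -> R -> R) :
  poly_bounded P g -> poly_bounded P h -> poly_bounded P (fun i x => g i x + h i x).
Proof.
  intros [c1 [q1 [c1_nonneg g_bd]]] [c2 [q2 [c2_nonneg h_bd]]].
  exists (c1 + c2), (Nat.max q1 q2); split; [lra|]; intros i x Hi.
  assert (X_ge1 : 1 <= 1 + Rabs x) by (pose proof (Rabs_pos x); lra).
  pose proof (Rle_pow _ q1 (Nat.max q1 q2) X_ge1 ltac:(lia)).
  pose proof (Rle_pow _ q2 (Nat.max q1 q2) X_ge1 ltac:(lia)).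
  pose proof (g_bd i x Hi); pose proof (h_bd i x Hi).
  pose proof (Rabs_triang (g i x) (h i x)); nra.
Qed.

Lemma poly_bounded_mult (g h : I -> R -> R) :
  poly_bounded P g -> poly_bounded P h -> poly_bounded P (fun i x => g i x * h i x).
Proof.
  intros [c1 [q1 [c1_nonneg g_bd]]] [c2 [q2 [c2_nonneg h_bd]]].
  exists (c1 * c2), (q1 + q2)%nat; split; [nra|]; intros i x Hi.
  rewrite Rabs_mult, pow_add.
  replace (c1 * c2 * ((1 + Rabs x) ^ q1 * (1 + Rabs x) ^ q2))
    with (c1 * (1 + Rabs x) ^ q1 * (c2 * (1 + Rabs x) ^ q2)) by ring.
  apply Rmult_le_compat; auto using Rabs_pos.
Qed.

Lemma poly_bounded_comp (h : R -> R) C p (g : I -> R -> R) :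
  (forall y, Rabs (h y) <= C * (1 + Rabs y ^ p)) ->
  poly_bounded P g -> poly_bounded P (fun i x => h (g i x)).
Proof.
  intros h_bd [c [q [c_nonneg g_bd]]].
  exists (2 * Rabs C * (1 + c) ^ p), (q * p)%nat; split.
  { pose proof (Rabs_pos C); pose proof (pow_le (1 + c) p ltac:(lra)); nra. }
  intros i x Hi; pose proof (g_bd i x Hi) as gx_bd.
  set (y := g i x) in *; set (X := 1 + Rabs x) in *.
  assert (X_ge1 : 1 <= X) by (pose proof (Rabs_pos x); unfold X; lra).
  assert (Xq_ge1 : 1 <= X ^ q) by (apply pow_R1_Rle, X_ge1).
  assert (y_bd : 1 + Rabs y <= (1 + c) * X ^ q) by nra.
  assert (y_pow_bd : (1 + Rabs y) ^ p <= (1 + c) ^ p * X ^ (q * p)).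
  { rewrite pow_mult, <- Rpow_mult_distr; apply pow_incr.
    split; [pose proof (Rabs_pos y); lra | exact y_bd]. }
  pose proof (one_plus_pow_le (Rabs y) p (Rabs_pos y)).
  pose proof (pow_le (Rabs y) p (Rabs_pos y)).
  assert (C * (1 + Rabs y ^ p) <= Rabs C * (1 + Rabs y ^ p))
    by (apply Rmult_le_compat_r; [lra | apply Rle_abs]).
  pose proof (h_bd y); pose proof (Rabs_pos C); nra.
Qed.

Lemma poly_bounded_upto (g : I -> nat -> R -> R) m :
  (forall n, (n <= m)%nat -> poly_bounded P (fun i => g i n)) ->
  exists c q, forall i n x, P i -> (n <= m)%nat -> Rabs (g i n x) <= c * (1 + Rabs x ^ q).
Proof.
  intro g_bd.
  assert (uniform : exists c q, 0 <= c /\ forall i n x, P i -> (n <= m)%nat ->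
                      Rabs (g i n x) <= c * (1 + Rabs x) ^ q).
  { induction m as [|m IH].
    - destruct (g_bd 0%nat (le_n 0)) as [c [q [c_nonneg bd]]].
      exists c, q; split; [exact c_nonneg|]; intros i n x Hi Hn.
      replace n with 0%nat by lia; auto.
    - destruct IH as [c1 [q1 [c1_nonneg bd1]]]; [intros; apply g_bd; lia|].
      destruct (g_bd (S m) (le_n _)) as [c2 [q2 [c2_nonneg bd2]]].
      exists (c1 + c2), (Nat.max q1 q2); split; [lra|]; intros i n x Hi Hn.
      assert (X_ge1 : 1 <= 1 + Rabs x) by (pose proof (Rabs_pos x); lra).
      pose proof (Rle_pow _ q1 (Nat.max q1 q2) X_ge1 ltac:(lia)).
      pose proof (Rle_pow _ q2 (Nat.max q1 q2) X_ge1 ltac:(lia)).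
      pose proof (pow_le (1 + Rabs x) (Nat.max q1 q2) ltac:(lra)).
      destruct (Nat.eq_dec n (S m)) as [-> | Hne].
      + pose proof (bd2 i x Hi).
        assert (c2 * (1 + Rabs x) ^ q2 <= c2 * (1 + Rabs x) ^ Nat.max q1 q2)
          by (apply Rmult_le_compat_l; assumption).
        nra.
      + pose proof (bd1 i n x Hi ltac:(lia)).
        assert (c1 * (1 + Rabs x) ^ q1 <= c1 * (1 + Rabs x) ^ Nat.max q1 q2)
          by (apply Rmult_le_compat_l; assumption).
        nra. }
  destruct uniform as [c [q [c_nonneg bd]]].
  exists (c * 2 ^ q), q; intros i n x Hi Hn.
  eapply Rle_trans; [apply bd; assumption|].
  rewrite Rmult_assoc; apply Rmult_le_compat_l; [exact c_nonneg|].
  apply pow_one_plus_le, Rabs_pos.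
Qed.

End PolyBounded.

Lemma Cm_ext m (g h : R -> R) : (forall x, g x = h x) -> Cm m g -> Cm m h.
Proof.
  intros gh [g_der g_cont]; split.
  - intros k x Hk; apply (ex_derive_ext (Derive_n g k)); [|now apply g_der].
    intro; apply Derive_n_ext, gh.
  - intro x; apply (continuous_ext (Derive_n g m)); [|apply g_cont].
    intro; apply Derive_n_ext, gh.
Qed.

Section YosidaDerivatives.
Variables (m : nat) (f : R -> R).
Hypotheses (f_Cm : Cm m f) (f_incr : nondecreasing f).

Lemma Cm_Derive_n_continuous i x : (i <= m)%nat -> continuous (Derive_n f i) x.
Proof.
  intro Hi; destruct (Nat.eq_dec i m) as [-> | Hne]; [apply (proj2 f_Cm)|].
  apply (ex_derive_continuous (K:=R_AbsRing) (V:=R_NormedModule)), (proj1 f_Cm); lia.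
Qed.

Lemma Cm_continuous x : continuous f x.
Proof. exact (Cm_Derive_n_continuous 0 x (Nat.le_0_l m)). Qed.

Lemma slope_denominator_ge1 lam y : 0 <= lam -> (1 <= m)%nat -> 1 <= 1 + lam * Derive_n f 1 y.
Proof.
  intros lam_nonneg Hm.
  assert (0 <= Derive_n f 1 y).
  { apply Derive_nonneg_of_nondecreasing; [|exact f_incr].
    intro x; apply (proj1 f_Cm 0%nat x); lia. }
  nra.
Qed.

Lemma slope_denominator_neq0 lam y : 0 <= lam -> (1 <= m)%nat -> 1 + lam * Derive_n f 1 y <> 0.
Proof. intros lam_nonneg Hm; pose proof (slope_denominator_ge1 lam y lam_nonneg Hm); lra. Qed.

Lemma is_derive_term_eval_resolvent lam t k x :
  0 < lam -> (term_order t <= k)%nat -> (k < m)%nat ->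
  is_derive (fun x => term_eval f lam (resolvent f lam x) t) x
            (term_eval f lam (resolvent f lam x) (term_dx t)).
Proof.
  intros lam_pos Ht Hk; eapply is_derive_eq.
  - apply (is_derive_comp (fun y => term_eval f lam y t) (resolvent f lam)).
    + apply (is_derive_term_eval f lam _ k t Ht).
      * intros i Hi; apply (proj1 f_Cm); lia.
      * intro; apply slope_denominator_neq0; lra || lia.
    + apply is_derive_resolvent; [exact lam_pos | exact f_incr |].
      intro y; apply (proj1 f_Cm 0%nat y); lia.
  - apply Rmult_comm.
Qed.

Lemma Derive_n_term_eval_resolvent lam t n x :
  0 < lam -> term_order t = 0%nat -> (n <= m)%nat ->
  Derive_n (fun x => term_eval f lam (resolvent f lam x) t) n x
  = term_eval f lam (resolvent f lam x) (Nat.iter n term_dx t).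
Proof.
  intros lam_pos Ht; revert x; induction n as [|n IH]; intros x Hn; [reflexivity|].
  simpl; rewrite (Derive_ext _
    (fun x => term_eval f lam (resolvent f lam x) (Nat.iter n term_dx t)))
    by (intro; apply IH; lia).
  apply is_derive_unique, (is_derive_term_eval_resolvent lam _ n); [exact lam_pos| |lia].
  pose proof (term_order_iter_dx n t); lia.
Qed.

Lemma Cm_term_eval_resolvent lam t :
  0 < lam -> term_order t = 0%nat -> Cm m (fun x => term_eval f lam (resolvent f lam x) t).
Proof.
  intros lam_pos Ht; split.
  - intros k x Hk.
    apply (ex_derive_ext (fun x => term_eval f lam (resolvent f lam x) (Nat.iter k term_dx t)))
      ; [intro; symmetry; apply Derive_n_term_eval_resolvent; auto; lia|].
    eexists; apply (is_derive_term_eval_resolvent lam _ k); [exact lam_pos| |exact Hk].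
    pose proof (term_order_iter_dx k t); lia.
  - intro x.
    apply (continuous_ext (fun x => term_eval f lam (resolvent f lam x) (Nat.iter m term_dx t)))
      ; [intro; symmetry; apply Derive_n_term_eval_resolvent; auto|].
    apply (filterlim_term_eval f (locally x) (fun _ => lam) (resolvent f lam)
             lam (resolvent f lam x) m).
    + pose proof (term_order_iter_dx m t); lia.
    + apply filterlim_const.
    + apply resolvent_continuous; auto using Cm_continuous.
    + intros; apply Cm_Derive_n_continuous; assumption.
    + intro; apply slope_denominator_neq0; lra || lia.
Qed.

Lemma yosida_eq_term_eval lam x :
  0 < lam -> yosida f lam x = term_eval f lam (resolvent f lam x) (TDer 0).
Proof. intro lam_pos; apply yosida_eq_comp_resolvent; auto using Cm_continuous. Qed.

Lemma Derive_n_yosida lam n x :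
  0 < lam -> (n <= m)%nat ->
  Derive_n (yosida f lam) n x = term_eval f lam (resolvent f lam x) (Nat.iter n term_dx (TDer 0)).
Proof.
  intros lam_pos Hn; rewrite <- Derive_n_term_eval_resolvent by auto.
  apply Derive_n_ext; intro; apply yosida_eq_term_eval, lam_pos.
Qed.

(* At lam = 0 the slope is 1, so [term_dx] acts as the derivative in y. *)
Lemma term_eval_iter_dx_lam0 n y :
  (n <= m)%nat -> term_eval f 0 y (Nat.iter n term_dx (TDer 0)) = Derive_n f n y.
Proof.
  revert y; induction n as [|n IH]; intros y Hn; [reflexivity|].
  simpl; rewrite (Derive_ext _ (fun y => term_eval f 0 y (Nat.iter n term_dx (TDer 0))))
    by (intro; symmetry; apply IH; lia).
  symmetry; apply is_derive_unique; eapply is_derive_eq.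
  - apply (is_derive_term_eval f 0 y n).
    + pose proof (term_order_iter_dx n (TDer 0)); simpl in *; lia.
    + intros i Hi; apply (proj1 f_Cm); lia.
    + intro; rewrite Rmult_0_l; lra.
  - unfold resolvent_slope; rewrite Rmult_0_l, Rplus_0_r, Rinv_1, Rmult_1_r; reflexivity.
Qed.

Lemma Cm_yosida_resolvent lam : 0 < lam -> Cm m (yosida f lam) /\ Cm m (resolvent f lam).
Proof.
  intro lam_pos; split.
  - apply (Cm_ext m (fun x => term_eval f lam (resolvent f lam x) (TDer 0))).
    + intro; symmetry; apply yosida_eq_term_eval, lam_pos.
    + exact (Cm_term_eval_resolvent lam (TDer 0) lam_pos eq_refl).
  - exact (Cm_term_eval_resolvent lam TArg lam_pos eq_refl).
Qed.

Lemma yosida_Derive_n_cvg n x :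
  (n <= m)%nat ->
  filterlim (fun lam => Derive_n (yosida f lam) n x) (at_right 0) (locally (Derive_n f n x)).
Proof.
  intro Hn; rewrite <- term_eval_iter_dx_lam0 by exact Hn.
  apply (filterlim_ext_loc
           (fun lam => term_eval f lam (resolvent f lam x) (Nat.iter n term_dx (TDer 0)))).
  { exists (mkposreal 1 Rlt_0_1); intros lam _ lam_pos.
    symmetry; apply Derive_n_yosida; assumption. }
  apply (filterlim_term_eval f (at_right 0) (fun lam => lam) (fun lam => resolvent f lam x) 0 x m).
  - pose proof (term_order_iter_dx n (TDer 0)); simpl in *; lia.
  - intros P [eps HP]; exists eps; intros y Hy _; exact (HP y Hy).
  - apply resolvent_cvg_id; [exact Cm_continuous | exact f_incr].
  - intros; apply Cm_Derive_n_continuous; assumption.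
  - intro; rewrite Rmult_0_l; lra.
Qed.

Section Growth.
Variables (C : R) (p : nat).
Hypothesis f_growth :
  forall n x, (n <= m)%nat -> Rabs (Derive_n f n x) <= C * (1 + Rabs x ^ p).

Lemma poly_bounded_resolvent : poly_bounded (fun lam => 0 < lam <= 1) (resolvent f).
Proof.
  exists (1 + Rabs (f 0)), 1%nat; split; [pose proof (Rabs_pos (f 0)); lra|].
  intros lam x [lam_pos lam_le1].
  pose proof (resolvent_abs_le f lam Cm_continuous f_incr lam_pos x).
  pose proof (Rabs_pos x); pose proof (Rabs_pos (f 0)); simpl; nra.
Qed.

Lemma poly_bounded_term_eval_resolvent t :
  (term_order t <= m)%nat ->
  poly_bounded (fun lam => 0 < lam <= 1) (fun lam x => term_eval f lam (resolvent f lam x) t).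
Proof.
  induction t as [| | |i|r|s IHs t IHt|s IHs t IHt]; simpl; intro Ht.
  - exact poly_bounded_resolvent.
  - apply (poly_bounded_of_bounded _ _ 1); intros lam x Hlam; rewrite Rabs_right; lra.
  - apply (poly_bounded_of_bounded _ _ 1); intros lam x Hlam.
    pose proof (slope_denominator_ge1 lam (resolvent f lam x) ltac:(lra) Ht).
    unfold resolvent_slope; rewrite Rabs_right.
    + rewrite <- Rinv_1; apply Rinv_le_contravar; lra.
    + apply Rle_ge, Rlt_le, Rinv_0_lt_compat; lra.
  - apply (poly_bounded_comp _ (Derive_n f i) C p (resolvent f)); [|exact poly_bounded_resolvent].
    intro; apply f_growth, Ht.
  - apply (poly_bounded_of_bounded _ _ (Rabs r)); intros; apply Rle_refl.
  - apply poly_bounded_plus; [apply IHs | apply IHt]; lia.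
  - apply poly_bounded_mult; [apply IHs | apply IHt]; lia.
Qed.

Lemma yosida_Derive_n_poly_growth :
  exists C q, forall lam n x, 0 < lam <= 1 -> (n <= m)%nat ->
    Rabs (Derive_n (yosida f lam) n x) <= C * (1 + Rabs x ^ q).
Proof.
  destruct (poly_bounded_upto (fun lam => 0 < lam <= 1)
     (fun lam n x => term_eval f lam (resolvent f lam x) (Nat.iter n term_dx (TDer 0))) m)
    as [c [q bd]].
  - intros n Hn; apply poly_bounded_term_eval_resolvent.
    pose proof (term_order_iter_dx n (TDer 0)); simpl in *; lia.
  - exists c, q; intros lam n x Hlam Hn.
    rewrite Derive_n_yosida by (lra || lia); apply bd; assumption.
Qed.

End Growth.

End YosidaDerivatives.

Theorem lemma4p4 (m : nat) (f : R -> R) :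
  Cm m f ->
  nondecreasing f ->
  (exists (C : R) (p : nat), forall (n : nat) (x : R), (n <= m)%nat ->
     Rabs (Derive_n f n x) <= C * (1 + Rabs x ^ p)) ->
  (forall lam : R, 0 < lam -> Cm m (yosida f lam) /\ Cm m (resolvent f lam)) /\
  (exists (C : R) (q : nat), forall (lam : R) (n : nat) (x : R),
     0 < lam <= 1 -> (n <= m)%nat ->
     Rabs (Derive_n (yosida f lam) n x) <= C * (1 + Rabs x ^ q)) /\
  (forall (n : nat) (x : R), (n <= m)%nat ->
     filterlim (fun lam => Derive_n (yosida f lam) n x) (at_right 0)
               (locally (Derive_n f n x))).
Proof.
  intros f_Cm f_incr [C [p f_growth]]; split; [|split].
  - exact (Cm_yosida_resolvent m f f_Cm f_incr).
  - exact (yosida_Derive_n_poly_growth m f f_Cm f_incr C p f_growth).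
  - exact (yosida_Derive_n_cvg m f f_Cm f_incr).
Qed.
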